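(* Let $r\geq1$ and let $\mathbf a=(a_1,\ldots,a_r)$ be positive integers with $\gcd(a_1,\ldots,a_r)=1$, and let $D=\operatorname{lcm}(a_1,\ldots,a_r)$. Then the Frobenius number satisfies $$F(a_1,\ldots,a_r)\leq D(r-1)-a_1-\cdots-a_r.$$
   Context: The Frobenius number $F(a_1,\ldots,a_r)$ is the largest integer $n$ that cannot be written as $a_1x_1+\cdots+a_rx_r$ with integers $x_1,\ldots,x_r\geq 0$. *)

From mathcomp Require Import all_boot all_order all_algebra.
Set Implicit Arguments. Unset Strict Implicit. Unset Printing Implicit Defensive.
Import Order.TTheory GRing.Theory Num.Theory.
Local Open Scope ring_scope.

Definition representable (r : nat) (a : 'I_r -> nat) (n : int) : Prop :=
  exists x : 'I_r -> nat, n = ((\sum_(i < r) a i * x i)%N)%:Z.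

Definition is_frobenius_number (r : nat) (a : 'I_r -> nat) (F : int) : Prop :=
  ~ representable a F /\ forall n : int, F < n -> representable a n.

From Stdlib Require Import Classical_Prop ClassicalEpsilon.
From mathcomp Require Import all_boot all_order all_algebra zify ring.
Import Order.TTheory GRing.Theory Num.Theory.
Local Open Scope ring_scope.

(* By Bezout, 1 = a_1 y_1 + ... + a_r y_r, so every integer n equals
   a_1 (n y_1) + ... + a_r (n y_r).  Reducing n y_i modulo m_i = D / a_i moves
   only multiples of a_i m_i = D, giving n = a_1 z_1 + ... + a_r z_r + D Q with
   0 <= z_i < m_i.  Then a_i z_i <= D - a_i, so the z-part is at most
   r D - (a_1 + ... + a_r); when n exceeds D (r - 1) - (a_1 + ... + a_r) this
   forces D Q > -D, i.e. Q >= 0, and D Q = a_1 (m_1 Q) is representable too.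
   Since -1 is not representable, the Frobenius number exists and obeys the
   same bound. *)

Lemma big_gcdn_Bezoutz {r : nat} (a : 'I_r -> nat) :
  exists y : 'I_r -> int,
    \sum_(i < r) (a i)%:Z * y i = (\big[gcdn/0%N]_(i < r) a i)%N%:Z.
Proof.
elim: r a => [|r IH] a; first by exists (fun=> 0); rewrite !big_ord0.
have [y Bezout_y] := IH (fun i => a (lift ord0 i)).
have [u [v Bezout_uv]] :=
  Bezoutz (a ord0)%:Z (\big[gcdn/0%N]_(i < r) a (lift ord0 i))%N%:Z.
exists (fun i => if unlift ord0 i is Some j then v * y j else u).
rewrite !big_ord_recl /= unlift_none.
under eq_bigr => i _ do rewrite liftK.
rewrite [LHS](_ : _ = u * (a ord0)%:Z + v * \sum_(i < r) (a (lift ord0 i))%:Z * y i).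
  by rewrite Bezout_y Bezout_uv.
rewrite mulrC mulr_sumr; congr (_ + _); apply: eq_bigr => i _; exact: mulrCA.
Qed.

Lemma biglcmn_gt0 {r : nat} {a : 'I_r -> nat} :
  (forall i, 0 < a i)%N -> (0 < \big[lcmn/1%N]_(i < r) a i)%N.
Proof.
by move=> a_gt0; elim/big_ind: _ => // m n m_gt0 n_gt0; rewrite lcmn_gt0 m_gt0.
Qed.

Lemma exists_max_int_failure {P : int -> Prop} {B c : int} :
  ~ P c -> (forall n, B < n -> P n) -> exists F, ~ P F /\ forall n, F < n -> P n.
Proof.
move=> not_Pc P_above.
pose fails k := if excluded_middle_informative (P (B - k%:Z)) then false else true.
have failsP k : reflect (~ P (B - k%:Z)) (fails k).
  by rewrite /fails; case: excluded_middle_informative; constructor.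
have dist_B m : ~ P m -> B - `|B - m|%N%:Z = m.
  move=> not_Pm; have : m <= B by rewrite leNgt; apply/negP => /P_above.
  by rewrite -subr_ge0 => /gez0_abs ->; rewrite opprB addrC subrK.
have fails_c : exists k, fails k by exists `|B - c|%N; apply/failsP; rewrite dist_B.
case: (ex_minnP fails_c) => k /failsP not_PF k_min.
exists (B - k%:Z); split=> // n lt_n; apply: NNPP => not_Pn.
have /k_min : fails `|B - n|%N by apply/failsP; rewrite dist_B.
by have := dist_B n not_Pn; lia.
Qed.

Section Representable.

Context {r : nat} {a : 'I_r -> nat}.

Lemma representableD m n :
  representable a m -> representable a n -> representable a (m + n).
Proof.
move=> [x ->] [y ->]; exists (fun i => x i + y i)%N.
by rewrite -PoszD -big_split; congr Posz; apply: eq_bigr => i _; rewrite mulnDr.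
Qed.

Lemma representable_gen i (k : nat) : representable a (a i * k)%N.
Proof.
exists (fun j => (j == i) * k)%N; rewrite (bigD1 i) //= eqxx mul1n big1 ?addn0 //.
by move=> j /negbTE ->; rewrite mul0n muln0.
Qed.

Hypotheses (a_gt0 : forall i, (0 < a i)%N)
           (a_coprime : (\big[gcdn/0%N]_(i < r) a i)%N = 1%N).
Context {D : nat}.
Hypotheses (D_gt0 : (0 < D)%N) (a_dvd_D : forall i, (a i %| D)%N).

Lemma reduced_decomposition (n : int) :
  exists2 z : 'I_r -> nat, (forall i, a i * z i + a i <= D)%N &
    exists Q : int, n = (\sum_(i < r) a i * z i)%N%:Z + D%:Z * Q.
Proof.
have [y Bezout_y] : exists y : 'I_r -> int, \sum_(i < r) (a i)%:Z * y i = 1.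
  by rewrite -[1]/(1%N%:Z) -a_coprime; exact: big_gcdn_Bezoutz.
pose m i := (D %/ a i)%N.
have a_m i : (a i * m i)%N = D by rewrite mulnC divnK.
have m_gt0 i : (0 < m i)%N by rewrite -(ltn_pmul2l (a_gt0 i)) a_m muln0.
pose z i := ((n * y i) %% (m i)%:Z)%Z.
have z_ge0 i : 0 <= z i by rewrite modz_ge0 // eqz_nat -lt0n.
exists (fun i => `|z i|%N).
  move=> i; rewrite -(a_m i) -mulnSr leq_pmul2l // -ltz_nat gez0_abs //.
  by rewrite ltz_pmod // ltz_nat.
exists (\sum_(i < r) ((n * y i) %/ (m i)%:Z)%Z).
rewrite -[LHS]mulr1 -Bezout_y (big_morph Posz PoszD (erefl 0%:Z)).
rewrite !mulr_sumr -big_split /=; apply: eq_bigr => i _.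
rewrite PoszM gez0_abs // mulrCA [in LHS](divz_eq (n * y i) (m i)%:Z) -(a_m i).
by rewrite PoszM /z; ring.
Qed.

Lemma representable_gt (n : int) :
  D%:Z * (r%:Z - 1) - (\sum_(i < r) a i)%N%:Z < n -> representable a n.
Proof.
move=> n_gt.
have [z z_small [Q def_n]] := reduced_decomposition n.
have z_part : (\sum_(i < r) a i * z i + \sum_(i < r) a i <= D * r)%N.
  by rewrite -big_split -iter_addn_0 -big_const_ord leq_sum.
have Q_ge0 : 0 <= Q.
  have : 0 < D%:Z * (Q + 1) by nia.
  by rewrite pmulr_rgt0 ?ltz_nat // ltzD1.
have [i0 _ | no_index] := pickP (@predT 'I_r); last first.
  by move: a_coprime; rewrite big_pred0.
rewrite def_n; apply: representableD; first by exists z.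
rewrite -(gez0_abs Q_ge0) -PoszM -(divnK (a_dvd_D i0)) mulnAC mulnC.
exact: representable_gen.
Qed.

End Representable.

Theorem proposition5p1 (r : nat) (a : 'I_r -> nat) :
  (1 <= r)%N ->
  (forall i, (0 < a i)%N) ->
  (\big[gcdn/0%N]_(i < r) a i)%N = 1%N ->
  exists F : int, is_frobenius_number a F /\
    F <= ((\big[lcmn/1%N]_(i < r) a i)%N)%:Z * (r%:Z - 1)
         - ((\sum_(i < r) a i)%N)%:Z.
Proof.
(* [1 <= r] is implied by coprimality, the empty gcd being 0. *)
move=> _ a_gt0 a_coprime.
have above := representable_gt a_gt0 a_coprime (biglcmn_gt0 a_gt0)
  (fun i => biglcmn_sup i (erefl true) (dvdnn (a i))).
have not_rep_neg1 : ~ representable a (-1) by case.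
have [F [F_not_rep F_max]] := exists_max_int_failure not_rep_neg1 above.
exists F; split=> //.
by rewrite leNgt; apply/negP => /above.
Qed.
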